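(* For $t>0$ and $\alpha>0$ define \[ f_{t,\alpha}(z) \coloneqq \frac{e^{-t/(z+1)}}{(z+1)^{\alpha}},\qquad z\in\mathbb{C}_+ , \] where $(z+1)^{\alpha}$ denotes the principal branch. Then $f_{t,\alpha}\in\mathcal{B}$ for all $t,\alpha>0$. Moreover, for each fixed $\alpha>0$ there exist constants $M>0$ and $t_0>0$ such that \[ \|f_{t,\alpha}\|_{\mathcal{B}_0}\le \frac{M}{t^{\alpha/2}}\qquad\text{for all } t\ge t_0 . \]
   Context: $\mathbb{C}_+=\{\lambda\in\mathbb{C}:\operatorname{Re}\lambda>0\}$. $\mathcal{B}$ denotes the space of all holomorphic functions $f$ on $\mathbb{C}_+$ such that \[ \|f\|_{\mathcal{B}_0}\coloneqq\int_0^\infty \sup_{\eta\in\mathbb{R}}|f'(\xi+i\eta)|\,d\xi<\infty . \] *)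

From Stdlib Require Import Reals.
From Coquelicot Require Import Coquelicot.

Open Scope R_scope.

Definition Cexp (z : C) : C :=
  (exp (Re z) * cos (Im z), exp (Re z) * sin (Im z)).

(** Principal argument, with values in (-PI, PI]. *)
Definition Carg (z : C) : R :=
  if Rlt_dec 0 (Re z) then atan (Im z / Re z)
  else if Rlt_dec (Re z) 0 then
    (if Rle_dec 0 (Im z) then atan (Im z / Re z) + PI
     else atan (Im z / Re z) - PI)
  else (if Rle_dec 0 (Im z) then PI / 2 else - (PI / 2)).

Definition Clog (z : C) : C := (ln (Cmod z), Carg z).

Definition Cpow (w : C) (a : R) : C := Cexp (RtoC a * Clog w).

Definition f_ta (t alpha : R) (z : C) : C :=
  Cexp (RtoC (- t) / (z + 1)) / Cpow (z + 1) alpha.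

Definition holo_Cplus (f : C -> C) : Prop :=
  forall z : C, 0 < Re z -> @ex_derive C_AbsRing C_NormedModule f z.

(** complex derivative f' (meaningful where f is holomorphic). *)
Definition Cderiv (f : C -> C) (z : C) : C := C_derive f z.

Definition Cmod_ := Cmod.

From mathcomp Require Import all_boot all_algebra all_classical all_reals all_analysis.
From mathcomp Require Import Rstruct Rstruct_topology.

Local Open Scope classical_set_scope.
Local Open Scope ereal_scope.

Definition B0norm (f : C -> C) : \bar R :=
  \int[@lebesgue_measure R]_(xi in `]0%R, +oo[)
     ereal_sup [set (Cmod_ (Cderiv f (xi, eta)))%:E | eta in [set: R]].

Definition inB (f : C -> C) : Prop :=
  holo_Cplus f /\ B0norm f < +oo.

(** Write [f_ta t a z = exp (E (z + 1))] with [E w = -t/w - a Log w], so that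
    [|f'(z)| = |E'(w)| e^(Re E(w)) <= (t/r^2 + a/r) e^(-t x/r^2) r^(-a)] where
    [x = Re w] and [r = |w| >= x].  The elementary bound [e^(-u) <= k^k u^(-k)],
    applied with [u = t x/r^2] and [k = a/2 + 1] resp. [k = a/2], makes the powers
    of [r] cancel (up to a factor [1/r <= 1/x]) and yields
    [|f'(z)| <= K(a) t^(-a/2) x^(-a/2-1)] uniformly in [Im z].  Integrating in [Re z] over [(0, +oo)] gives
    [||f_ta t a||_B0 <= (2 K(a)/a) t^(-a/2)] for every [t > 0]. *)

From Stdlib Require Import Reals Lra.
From Coquelicot Require Coquelicot.

Module DerivativeEstimate.
Import Coquelicot.
Open Scope R_scope.

Lemma differentiable_pt_lim_eq f x y lx ly lx' ly' :
  differentiable_pt_lim f x y lx ly -> lx = lx' -> ly = ly' ->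
  differentiable_pt_lim f x y lx' ly'.
Proof. now intros H <- <-. Qed.

Lemma differentiable_pt_lim_swap f x y lx ly :
  differentiable_pt_lim f x y lx ly ->
  differentiable_pt_lim (fun u v => f v u) y x ly lx.
Proof.
intros H eps. destruct (H eps) as [d Hd]. exists d. intros u v Hu Hv.
rewrite Rmax_comm.
replace (f v u - f x y - (ly * (u - y) + lx * (v - x)))
  with (f v u - f x y - (lx * (v - x) + ly * (u - y))) by ring.
now apply Hd.
Qed.

Lemma differentiable_pt_lim_proj2_0 (g : R -> R) x y l :
  derivable_pt_lim g y l -> differentiable_pt_lim (fun _ v => g v) x y 0 l.
Proof.
intros H. apply (differentiable_pt_lim_swap (fun u _ => g u)).
now apply differentiable_pt_lim_proj1_0.
Qed.

Lemma differentiable_pt_lim_Rplus x y : differentiable_pt_lim Rplus x y 1 1.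
Proof.
intros [eps Heps]. exists (mkposreal eps Heps). intros u v _ _; simpl.
replace (u + v - (x + y) - (1 * (u - x) + 1 * (v - y))) with 0 by ring.
rewrite Rabs_R0. apply Rmult_le_pos; [lra |].
apply Rle_trans with (Rabs (u - x)); [apply Rabs_pos | apply Rmax_l].
Qed.

Lemma differentiable_pt_lim_Rmult x y : differentiable_pt_lim Rmult x y y x.
Proof.
intros [eps Heps]. exists (mkposreal eps Heps). intros u v Hu Hv; simpl in *.
replace (u * v - x * y - (y * (u - x) + x * (v - y))) with ((u - x) * (v - y)) by ring.
rewrite Rabs_mult, Rmult_comm.
apply Rmult_le_compat; [apply Rabs_pos | apply Rabs_pos | lra | apply Rmax_l].
Qed.

Lemma differentiable_pt_lim_plus f g x y fx fy gx gy :
  differentiable_pt_lim f x y fx fy -> differentiable_pt_lim g x y gx gy ->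
  differentiable_pt_lim (fun u v => f u v + g u v) x y (fx + gx) (fy + gy).
Proof.
intros Hf Hg. eapply differentiable_pt_lim_eq.
- apply (differentiable_pt_lim_comp Rplus); [apply differentiable_pt_lim_Rplus | exact Hf | exact Hg].
- ring.
- ring.
Qed.

Lemma differentiable_pt_lim_mult f g x y fx fy gx gy :
  differentiable_pt_lim f x y fx fy -> differentiable_pt_lim g x y gx gy ->
  differentiable_pt_lim (fun u v => f u v * g u v) x y
    (fx * g x y + f x y * gx) (fy * g x y + f x y * gy).
Proof.
intros Hf Hg. eapply differentiable_pt_lim_eq.
- apply (differentiable_pt_lim_comp Rmult); [apply differentiable_pt_lim_Rmult | exact Hf | exact Hg].
- ring.
- ring.
Qed.

Lemma differentiable_pt_lim_comp1 (g : R -> R) h x y l hx hy :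
  derivable_pt_lim g (h x y) l -> differentiable_pt_lim h x y hx hy ->
  differentiable_pt_lim (fun u v => g (h u v)) x y (l * hx) (l * hy).
Proof.
intros Hg Hh. eapply differentiable_pt_lim_eq.
- apply (differentiable_pt_lim_comp (fun a _ => g a) h h); [| exact Hh | exact Hh].
  apply differentiable_pt_lim_proj1_0, Hg.
- ring.
- ring.
Qed.

Lemma differentiable_pt_lim_sqnorm x y :
  differentiable_pt_lim (fun u v => u ^ 2 + v ^ 2) x y (2 * x) (2 * y).
Proof.
assert (Hsq : forall a, derivable_pt_lim (fun u => u ^ 2) a (2 * a)).
{ intros a. apply is_derive_Reals. auto_derive; [easy | ring]. }
eapply differentiable_pt_lim_eq.
- apply (differentiable_pt_lim_plus (fun u _ => u ^ 2) (fun _ v => v ^ 2)).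
  + apply differentiable_pt_lim_proj1_0, Hsq.
  + apply differentiable_pt_lim_proj2_0, Hsq.
- ring.
- ring.
Qed.

Lemma ball_C_Rabs (x y u v d : R) :
  @ball (AbsRing_UniformSpace C_AbsRing) (x, y) d (u, v) -> Rabs (u - x) < d /\ Rabs (v - y) < d.
Proof.
unfold ball; simpl; unfold AbsRing_ball; change (abs ?w) with (Cmod w).
unfold minus, plus, opp; simpl; unfold Cplus, Copp; simpl; intros Hd.
pose proof (Rmax_Cmod (u + - x, v + - y)) as Hmax; simpl in Hmax.
pose proof (Rmax_l (Rabs (u + - x)) (Rabs (v + - y))).
pose proof (Rmax_r (Rabs (u + - x)) (Rabs (v + - y))).
unfold Rminus. lra.
Qed.

Lemma is_derive_Cauchy_Riemann (f : C -> C) (z l : C) :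
  differentiable_pt_lim (fun x y => Re (f (x, y))) (Re z) (Im z) (Re l) (- Im l) ->
  differentiable_pt_lim (fun x y => Im (f (x, y))) (Re z) (Im z) (Im l) (Re l) ->
  is_derive f z l.
Proof.
intros HRe HIm. split; [apply is_linear_scal_l |].
intros z' Hz'.
apply (@is_filter_lim_locally_unique _ (AbsRing_NormedModule C_AbsRing)) in Hz'. subst z'.
intros [eps Heps].
assert (Heps4 : 0 < eps / 4) by lra.
destruct (HRe (mkposreal _ Heps4)) as [d1 H1].
destruct (HIm (mkposreal _ Heps4)) as [d2 H2].
exists (mkposreal _ (Rmin_stable_in_posreal d1 d2)).
destruct z as [x y], l as [l1 l2]; intros [u v] Huv; simpl in *.
set (du := u - x). set (dv := v - y).
assert (Hd : Rmax (Rabs du) (Rabs dv) <= Cmod (du, dv)) by apply (Rmax_Cmod (du, dv)).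
destruct (ball_C_Rabs _ _ _ _ _ Huv) as [Hdu Hdv].
specialize (H1 u v (Rlt_le_trans _ _ _ Hdu (Rmin_l _ _)) (Rlt_le_trans _ _ _ Hdv (Rmin_l _ _))).
specialize (H2 u v (Rlt_le_trans _ _ _ Hdu (Rmin_r _ _)) (Rlt_le_trans _ _ _ Hdv (Rmin_r _ _))).
fold du dv in H1, H2.
change (norm ?w) with (Cmod w).
change (@norm C_AbsRing (AbsRing_NormedModule C_AbsRing) ?w) with (Cmod w).
unfold minus, plus, opp, scal, mult; simpl; unfold Cplus, Copp, Cmult; simpl.
eapply Rle_trans; [apply Cmod_2Rmax |]; simpl.
change (u + - x) with du; change (v + - y) with dv.
apply Rle_trans with (sqrt 2 * (eps / 4 * Rmax (Rabs du) (Rabs dv))).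
{ apply Rmult_le_compat_l; [apply sqrt_pos | apply Rmax_lub].
  - eapply Rle_trans; [right | exact H1]. f_equal. unfold Re. ring.
  - eapply Rle_trans; [right | exact H2]. f_equal. unfold Im. ring. }
assert (Hsqrt2 : sqrt 2 < 2) by (apply sqrt_less; lra).
assert (HM : 0 <= eps * Rmax (Rabs du) (Rabs dv)).
{ apply Rmult_le_pos; [lra |]. eapply Rle_trans; [apply Rabs_pos | apply Rmax_l]. }
apply Rle_trans with (eps * Rmax (Rabs du) (Rabs dv)); [nra |].
apply Rmult_le_compat_l; lra.
Qed.

Lemma is_derive_Cexp (z : C) : is_derive Cexp z (Cexp z).
Proof.
destruct z as [x y]. apply is_derive_Cauchy_Riemann; unfold Cexp; simpl.
- eapply differentiable_pt_lim_eq.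
  + apply (differentiable_pt_lim_mult (fun u _ => exp u) (fun _ v => cos v)).
    * apply differentiable_pt_lim_proj1_0, derivable_pt_lim_exp.
    * apply differentiable_pt_lim_proj2_0, derivable_pt_lim_cos.
  + ring.
  + ring.
- eapply differentiable_pt_lim_eq.
  + apply (differentiable_pt_lim_mult (fun u _ => exp u) (fun _ v => sin v)).
    * apply differentiable_pt_lim_proj1_0, derivable_pt_lim_exp.
    * apply differentiable_pt_lim_proj2_0, derivable_pt_lim_sin.
  + ring.
  + ring.
Qed.

Lemma derivable_pt_lim_Rinv x : x <> 0 -> derivable_pt_lim Rinv x (- / (x * x)).
Proof. intros Hx. apply is_derive_Reals. auto_derive; [easy | field; easy]. Qed.

Lemma is_derive_Cinv (w : C) : w <> 0%C -> is_derive Cinv w (- (/ w * / w))%C.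
Proof.
intros Hw. destruct w as [x y].
assert (Hr : 0 < x * x + y * y).
{ destruct (Req_dec x 0) as [-> | Hx]; [destruct (Req_dec y 0) as [-> | Hy] |].
  - now destruct Hw.
  - nra.
  - nra. }
assert (Hinv : derivable_pt_lim Rinv (x ^ 2 + y ^ 2) (- / ((x ^ 2 + y ^ 2) * (x ^ 2 + y ^ 2))))
  by (apply derivable_pt_lim_Rinv; simpl; nra).
apply is_derive_Cauchy_Riemann; unfold Cinv; simpl.
- eapply differentiable_pt_lim_eq.
  + apply (differentiable_pt_lim_mult (fun u _ => u) (fun u v => / (u ^ 2 + v ^ 2))).
    * apply differentiable_pt_lim_proj1_0, derivable_pt_lim_id.
    * apply differentiable_pt_lim_comp1; [exact Hinv | apply differentiable_pt_lim_sqnorm].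
  + simpl; field; intros ?; nra.
  + simpl; field; intros ?; nra.
- eapply differentiable_pt_lim_eq.
  + apply (differentiable_pt_lim_mult (fun _ v => - v) (fun u v => / (u ^ 2 + v ^ 2))).
    * apply differentiable_pt_lim_proj2_0, derivable_pt_lim_opp, derivable_pt_lim_id.
    * apply differentiable_pt_lim_comp1; [exact Hinv | apply differentiable_pt_lim_sqnorm].
  + simpl; field; intros ?; nra.
  + simpl; field; intros ?; nra.
Qed.

Lemma derivable_pt_lim_ln_sqrt a : 0 < a -> derivable_pt_lim (fun s => ln (sqrt s)) a (/ (2 * a)).
Proof.
intros Ha. pose proof (sqrt_lt_R0 a Ha) as Hs. pose proof (sqrt_sqrt a (Rlt_le _ _ Ha)) as Hss.
apply is_derive_Reals. auto_derive; [easy |].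
field_simplify; [| lra | lra]. rewrite <- Hss at 2. field. lra.
Qed.

Lemma is_derive_Clog (w : C) : 0 < Re w -> is_derive Clog w (/ w)%C.
Proof.
intros Hw. destruct w as [x y]. simpl in Hw.
assert (Hr : 0 < x * x + y * y) by nra.
apply is_derive_Cauchy_Riemann; unfold Clog, Cinv; simpl.
- eapply differentiable_pt_lim_eq.
  + apply (differentiable_pt_lim_comp1 (fun s => ln (sqrt s))).
    * apply derivable_pt_lim_ln_sqrt. simpl. nra.
    * apply differentiable_pt_lim_sqnorm.
  + simpl; field; intros ?; nra.
  + simpl; field; intros ?; nra.
- apply differentiable_pt_lim_ext with (fun u v => atan (v * / u)).
  { exists (mkposreal x Hw). intros u v Hu _. simpl in Hu.
    assert (0 < u) by (apply Rabs_def2 in Hu; lra).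
    unfold Carg; simpl. destruct (Rlt_dec 0 u); [reflexivity | lra]. }
  eapply differentiable_pt_lim_eq.
  + apply (differentiable_pt_lim_comp1 atan (fun u v => v * / u)); [apply derivable_pt_lim_atan |].
    apply (differentiable_pt_lim_mult (fun _ v => v) (fun u _ => / u)).
    * apply differentiable_pt_lim_proj2_0, derivable_pt_lim_id.
    * apply differentiable_pt_lim_proj1_0, derivable_pt_lim_Rinv. lra.
  + simpl; unfold Rsqr; field; split; intros ?; nra.
  + simpl; unfold Rsqr; field; split; intros ?; nra.
Qed.

(* Coquelicot has two non-convertible normed-module structures on [C]; its generic
   lemmas over an [AbsRing] produce derivatives for [AbsRing_NormedModule C_AbsRing]. *)
Lemma is_derive_C_of_AbsRing (f : C -> C) (z l : C) :
  @is_derive C_AbsRing (AbsRing_NormedModule C_AbsRing) f z l -> is_derive f z l.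
Proof. intros [[Hplus Hscal [M HM]] Hlim]. now split; [split; [| | exists M] |]. Qed.

Lemma is_derive_AbsRing_of_C (f : C -> C) (z l : C) :
  is_derive f z l -> @is_derive C_AbsRing (AbsRing_NormedModule C_AbsRing) f z l.
Proof. intros [[Hplus Hscal [M HM]] Hlim]. now split; [split; [| | exists M] |]. Qed.

Lemma is_derive_Ccomp (f g : C -> C) (z df dg : C) :
  is_derive f (g z) df -> is_derive g z dg -> is_derive (fun z => f (g z)) z (df * dg)%C.
Proof.
intros Hf Hg. rewrite Cmult_comm.
exact (is_derive_comp f g z df dg Hf (is_derive_AbsRing_of_C g z dg Hg)).
Qed.

Lemma is_derive_Cscal (c : C) (f : C -> C) (z l : C) :
  is_derive f z l -> is_derive (fun z => c * f z)%C z (c * l)%C.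
Proof.
intros H. apply is_derive_C_of_AbsRing.
replace (c * l)%C with (@plus C_AbsRing (mult zero (f z)) (mult c l))
  by (apply injective_projections; simpl; ring).
apply (is_derive_mult (fun _ => c) f).
- apply (@is_derive_const C_AbsRing (AbsRing_NormedModule C_AbsRing)).
- apply is_derive_AbsRing_of_C, H.
- apply Cmult_comm.
Qed.

Lemma is_derive_Cshift (c z : C) : is_derive (fun z => z + c)%C z (RtoC 1).
Proof.
apply is_derive_C_of_AbsRing.
replace (RtoC 1) with (@plus (AbsRing_NormedModule C_AbsRing) one zero) by (apply injective_projections; simpl; ring).
apply (is_derive_plus (fun z => z) (fun _ => c)); [apply is_derive_id | apply is_derive_const].
Qed.

Lemma Cexp_minus (a b : C) : (Cexp a / Cexp b)%C = Cexp (a - b)%C.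
Proof.
destruct a as [a1 a2], b as [b1 b2].
assert (Hb : exp b1 * cos b2 * (exp b1 * cos b2 * 1) + exp b1 * sin b2 * (exp b1 * sin b2 * 1)
             = exp b1 * exp b1).
{ pose proof (sin2_cos2 b2). unfold Rsqr in H. nra. }
pose proof (exp_pos b1).
unfold Cdiv, Cexp, Cinv, Cmult, Cminus, Cplus, Copp; simpl.
rewrite Hb, exp_plus, exp_Ropp, cos_plus, sin_plus, cos_neg, sin_neg.
apply injective_projections; simpl; field; lra.
Qed.

Lemma Cmod_Cexp (q : C) : Cmod (Cexp q) = exp (Re q).
Proof.
destruct q as [a b]. unfold Cmod, Cexp; simpl.
replace (exp a * cos b * (exp a * cos b * 1) + exp a * sin b * (exp a * sin b * 1))
  with (exp a * exp a) by (pose proof (sin2_cos2 b); unfold Rsqr in H; nra).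
apply sqrt_square, Rlt_le, exp_pos.
Qed.

Definition f_ta_exponent (t a : R) (w : C) : C := (RtoC (- t) / w - RtoC a * Clog w)%C.

Definition f_ta_exponent_derive (t a : R) (w : C) : C :=
  (RtoC t * (/ w * / w) - RtoC a * / w)%C.

Lemma f_ta_Cexp t a z : f_ta t a z = Cexp (f_ta_exponent t a (z + 1)).
Proof. apply Cexp_minus. Qed.

Lemma is_derive_f_ta_exponent t a w :
  0 < Re w -> is_derive (f_ta_exponent t a) w (f_ta_exponent_derive t a w).
Proof.
intros Hw.
assert (Hw0 : w <> 0%C) by (intros ->; simpl in Hw; lra).
replace (f_ta_exponent_derive t a w)
  with (minus (RtoC (- t) * - (/ w * / w)) (RtoC a * / w))%C
  by (unfold f_ta_exponent_derive, minus, plus, opp; apply injective_projections; simpl; ring).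
apply (is_derive_minus (fun w => RtoC (- t) * / w) (fun w => RtoC a * Clog w))%C.
- apply is_derive_Cscal, is_derive_Cinv, Hw0.
- apply is_derive_Cscal, is_derive_Clog, Hw.
Qed.

Lemma is_derive_f_ta t a z : 0 < Re z ->
  is_derive (f_ta t a) z
    (f_ta_exponent_derive t a (z + 1) * Cexp (f_ta_exponent t a (z + 1)))%C.
Proof.
intros Hz.
apply (is_derive_ext (fun z => Cexp (f_ta_exponent t a (z + 1)))); [intros; symmetry; apply f_ta_Cexp |].
replace (f_ta_exponent_derive t a (z + 1) * Cexp (f_ta_exponent t a (z + 1)))%C
  with (Cexp (f_ta_exponent t a (z + 1)) * (f_ta_exponent_derive t a (z + 1) * 1))%C by ring.
apply is_derive_Ccomp; [apply is_derive_Cexp |].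
apply (is_derive_Ccomp (f_ta_exponent t a) (fun z => z + 1)%C); [| apply is_derive_Cshift].
apply is_derive_f_ta_exponent. unfold Re in *. simpl. lra.
Qed.

Lemma exp_le_exp x y : x <= y -> exp x <= exp y.
Proof. intros [Hlt | ->]; [apply Rlt_le, exp_increasing, Hlt | apply Rle_refl]. Qed.

Lemma exp_Ropp_le_Rpower u k : 0 < u -> 0 < k -> exp (- u) <= Rpower k k * Rpower u (- k).
Proof.
intros Hu Hk. unfold Rpower. rewrite <- exp_plus. apply exp_le_exp.
assert (Hln : 1 + ln (u / k) <= u / k).
{ rewrite <- (exp_ln (u / k)) at 2 by (apply Rdiv_lt_0_compat; assumption).
  apply exp_ineq1_le. }
unfold Rdiv in Hln. rewrite ln_mult, ln_Rinv in Hln by (try apply Rinv_0_lt_compat; assumption).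
assert (Hk' : k * (1 + (ln u + - ln k)) <= k * (u * / k)) by (apply Rmult_le_compat_l; lra).
replace (k * (u * / k)) with u in Hk' by (field; lra).
nra.
Qed.

Definition deriv_bound_const (a : R) : R :=
  Rpower (a / 2 + 1) (a / 2 + 1) + a * Rpower (a / 2) (a / 2).

Lemma deriv_bound_const_gt0 a : 0 < a -> 0 < deriv_bound_const a.
Proof.
intros Ha. unfold deriv_bound_const, Rpower.
pose proof (exp_pos ((a / 2 + 1) * ln (a / 2 + 1))). pose proof (exp_pos (a / 2 * ln (a / 2))).
nra.
Qed.

Lemma f_ta_majorant_le t a x r : 0 < t -> 0 < a -> 0 < x -> x <= r ->
  exp (- (t * x / r ^ 2) - a * ln r) * (t / r ^ 2 + a / r)
  <= deriv_bound_const a * Rpower t (- (a / 2)) * Rpower x (- (a / 2 + 1)).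
Proof.
intros Ht Ha Hx Hxr.
assert (Hr : 0 < r) by lra.
set (k := a / 2).
set (u := t * x / r ^ 2).
assert (Hu : 0 < u) by (apply Rdiv_lt_0_compat; [nra | apply pow_lt, Hr]).
assert (Hlnu : ln u = ln t + ln x - 2 * ln r).
{ unfold u, Rdiv. rewrite ln_mult, ln_mult, ln_Rinv, ln_pow by (try apply pow_lt; try apply Rinv_0_lt_compat; try apply pow_lt; nra).
  simpl. ring. }
assert (Hln2 : 2 * ln r = ln (r ^ 2)) by (rewrite ln_pow by exact Hr; simpl; ring).
assert (Ht_r2 : t / r ^ 2 = exp (ln t - 2 * ln r)).
{ unfold Rminus. rewrite exp_plus, exp_Ropp, Hln2, !exp_ln by (try apply pow_lt; assumption).
  reflexivity. }
assert (Ha_r : a / r = a * exp (- ln r)) by (rewrite exp_Ropp, exp_ln by exact Hr; reflexivity).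
assert (Hlnxr : ln x <= ln r) by (apply ln_le; assumption).
pose proof (exp_Ropp_le_Rpower u (k + 1) Hu ltac:(unfold k; lra)) as Hexp1.
pose proof (exp_Ropp_le_Rpower u k Hu ltac:(unfold k; lra)) as Hexp2.
unfold deriv_bound_const, Rpower in *. fold k u in Hexp1, Hexp2 |- *.
unfold Rminus at 1. rewrite exp_plus, Ht_r2, Ha_r, Rmult_plus_distr_l, !Rmult_plus_distr_r.
apply Rplus_le_compat.
- apply Rle_trans with (exp ((k + 1) * ln (k + 1)) * exp (- (k + 1) * ln u)
                        * exp (- (a * ln r)) * exp (ln t - 2 * ln r)).
  { apply Rmult_le_compat_r; [apply Rlt_le, exp_pos |].
    apply Rmult_le_compat_r; [apply Rlt_le, exp_pos | exact Hexp1]. }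
  rewrite <- !exp_plus. apply exp_le_exp. rewrite Hlnu. unfold k. lra.
- apply Rle_trans with (a * (exp (k * ln k) * exp (- k * ln u)
                        * exp (- (a * ln r)) * exp (- ln r))).
  { rewrite (Rmult_comm a (exp (- ln r))), <- !Rmult_assoc, (Rmult_comm _ a), !Rmult_assoc.
    apply Rmult_le_compat_l; [lra |].
    rewrite <- !Rmult_assoc. apply Rmult_le_compat_r; [apply Rlt_le, exp_pos |].
    apply Rmult_le_compat_r; [apply Rlt_le, exp_pos | exact Hexp2]. }
  rewrite !Rmult_assoc. apply Rmult_le_compat_l; [lra |].
  rewrite <- !exp_plus. apply exp_le_exp. rewrite Hlnu. unfold k. nra.
Qed.

Lemma Re_f_ta_exponent t a (w : C) : w <> 0%C ->
  Re (f_ta_exponent t a w) = - (t * Re w / Cmod w ^ 2) - a * ln (Cmod w).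
Proof.
intros Hw.
assert (Hr : 0 < Cmod w) by (apply Cmod_gt_0, Hw).
assert (Hr2 : Cmod w ^ 2 = Re w * Re w + Im w * Im w)
  by (unfold Cmod, Re, Im; rewrite pow2_sqrt by nra; ring).
rewrite Hr2. destruct w as [x y]. unfold f_ta_exponent, Clog; simpl in *. field. nra.
Qed.

Lemma Cmod_f_ta_exponent_derive_le t a (w : C) : 0 <= t -> 0 <= a -> w <> 0%C ->
  Cmod (f_ta_exponent_derive t a w) <= t / Cmod w ^ 2 + a / Cmod w.
Proof.
intros Ht Ha Hw. unfold f_ta_exponent_derive, Cminus.
eapply Rle_trans; [apply Cmod_triangle |].
rewrite Cmod_opp, !Cmod_mult, !Cmod_R, Cmod_inv by exact Hw.
rewrite !Rabs_right by lra. right. field. apply Rgt_not_eq, Cmod_gt_0, Hw.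
Qed.

Lemma Cmod_Cderiv_f_ta_le t a z : 0 < t -> 0 < a -> 0 < Re z ->
  Cmod (Cderiv (f_ta t a) z)
  <= deriv_bound_const a * Rpower t (- (a / 2)) * Rpower (Re z + 1) (- (a / 2 + 1)).
Proof.
intros Ht Ha Hz.
unfold Cderiv. rewrite (is_C_derive_unique _ _ _ (is_derive_f_ta t a z Hz)).
rewrite Cmod_mult, Cmod_Cexp.
replace (Re z + 1) with (Re (z + 1)) by reflexivity.
set (w := (z + 1)%C).
assert (Hw : 0 < Re w) by (unfold w, Re in *; simpl; lra).
assert (Hw0 : w <> 0%C) by (intros Hw0; rewrite Hw0 in Hw; simpl in Hw; lra).
rewrite Re_f_ta_exponent, Rmult_comm by exact Hw0.
eapply Rle_trans.
- apply Rmult_le_compat_l; [apply Rlt_le, exp_pos |].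
  apply Cmod_f_ta_exponent_derive_le; [lra | lra | exact Hw0].
- apply f_ta_majorant_le; try assumption.
  eapply Rle_trans; [apply Rle_abs | apply re_le_Cmod].
Qed.

Lemma holo_Cplus_f_ta t a : holo_Cplus (f_ta t a).
Proof. intros z Hz. eexists. apply is_derive_f_ta, Hz. Qed.

End DerivativeEstimate.

From mathcomp Require Import Rstruct Rstruct_topology.
From mathcomp Require Import all_boot all_order all_algebra.
From mathcomp Require Import all_classical all_reals all_analysis.
From mathcomp Require Import measurable_realfun ring.
Import Order.TTheory GRing.Theory Num.Theory.
Import numFieldNormedType.Exports.
Local Open Scope classical_set_scope.
Local Open Scope ring_scope.

(* No measurability is needed: the integral of a nonnegative function is a
   supremum over its simple minorants. *)
Lemma ge0_le_integral_nonmeasurable d (T : measurableType d) (R : realType)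
    (mu : {measure set T -> \bar R}) (D : set T) (f1 f2 : T -> \bar R) :
  (forall x, D x -> (0 <= f1 x)%E) -> (forall x, D x -> (f1 x <= f2 x)%E) ->
  (\int[mu]_(x in D) f1 x <= \int[mu]_(x in D) f2 x)%E.
Proof.
move=> f10 f12.
have f20 x : D x -> (0 <= f2 x)%E by move=> Dx; exact: le_trans (f10 x Dx) (f12 x Dx).
rewrite (ge0_integralE _ f10) (ge0_integralE _ f20) /=.
apply: ereal_sup_le => _ [h /= hf <-]; exists h => //= x.
apply: le_trans (hf x) _.
by rewrite /patch; case: ifP => // /[!inE] Dx; exact: f12.
Qed.

Section shifted_power.
Context {R : realType}.

Lemma is_derive_powR_shift (a x : R) : -1 < x ->
  is_derive x 1 (fun y => (y + 1) `^ a) (a * (x + 1) `^ (a - 1)).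
Proof.
move=> x1; have x10 : 0 < x + 1 by rewrite -ltrBlDr sub0r.
have := @is_derive1_comp R (@powR R ^~ a) (fun y => y + 1) x (a * (x + 1) `^ (a - 1)) 1.
rewrite mulr1; apply; first exact: is_derive1_powR.
exact: is_derive_shift.
Qed.

Lemma cvgy_powR_shift (b : R) : 0 < b -> (x + 1) `^ (- b) @[x --> +oo] --> 0.
Proof.
move=> b0.
have blny : (fun x => b * ln (x + 1)) @ +oo --> +oo.
  apply/cvgryPge => A; near=> x.
  have xA : expR (A / b) <= x by near: x; apply: nbhs_pinfty_ge; exact: num_real.
  have x1A : expR (A / b) <= x + 1 by apply: le_trans xA _; rewrite lerDl.
  have x10 : 0 < x + 1 by apply: lt_le_trans x1A; exact: expR_gt0.
  by rewrite -ler_pdivrMl // -(expRK (b^-1 * A)) ler_ln ?posrE ?expR_gt0 // mulrC.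
apply: cvg_trans (cvg_comp _ _ blny (@cvgr_expR R)).
apply: near_eq_cvg; near=> x.
have x0 : 0 < x by near: x; apply: nbhs_pinfty_gt; exact: num_real.
have x10 : 0 < x + 1 by apply: lt_le_trans x0 _; rewrite lerDl.
by rewrite /= /powR gt_eqF // mulNr.
Unshelve. all: by end_near. Qed.

Lemma integral_powR_shift (c b : R) : 0 < c -> 0 < b ->
  (\int[lebesgue_measure]_(x in `]0%R, +oo[) (c * (x + 1) `^ (- (b + 1)))%:E
     = (c / b)%:E)%E.
Proof.
move=> c0 b0.
set f := fun x : R => c * (x + 1) `^ (- (b + 1)).
set F := fun x : R => - (c / b) * (x + 1) `^ (- b).
have dF (x : R) : -1 < x -> is_derive x 1 F (f x).
  move=> x1; rewrite /f.
  have -> : c * (x + 1) `^ (- (b + 1)) = - (c / b) * (- b * (x + 1) `^ (- b - 1)).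
    by rewrite opprD; field; rewrite gt_eqF.
  exact/is_deriveZ/is_derive_powR_shift.
have df (x : R) : -1 < x -> derivable f x 1.
  by move=> x1; apply: ex_derive; apply: is_deriveZ; exact: is_derive_powR_shift.
have mf : measurable_fun setT (cst c \* (@powR R ^~ (- (b + 1)) \o (fun x => x + 1))).
  apply: measurable_funM; first exact: measurable_cst.
  apply: measurableT_comp; first exact: measurable_powR.
  exact: measurable_funD.
rewrite integral_itv_obnd_cbnd; last by apply/measurable_EFinP; apply: measurable_funTS; exact: mf.
rewrite (@ge0_continuous_FTC2y R f F 0 0).
- have F0 : (0 + 1 : R) `^ (- b) = 1 by rewrite add0r powR1.
  by rewrite /F F0 mulr1 -EFinN opprK add0e.
- by move=> x x0; rewrite /f mulr_ge0 ?powR_ge0 // ltW.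
- apply: continuous_in_subspaceT => x /set_mem; rewrite /= in_itv /= andbT => x0.
  apply/differentiable_continuous/derivable1_diffP/df.
  exact: lt_le_trans (ltrN10 R) x0.
- by rewrite -(mulr0 (- (c / b))); apply: cvgMl_tmp; exact: cvgy_powR_shift.
- by move=> x x0; apply: ex_derive; apply: dF; exact: lt_trans (ltrN10 R) x0.
- apply/cvg_at_right_filter/differentiable_continuous/derivable1_diffP.
  apply: ex_derive; apply: dF; exact: ltrN10.
- move=> x /[!in_itv] /= /andP[x0 _]; rewrite derive1E.
  by have [_ ->] := dF x (lt_trans (ltrN10 R) x0).
Qed.

End shifted_power.

Lemma Rpower_powR (x y : R) : (0 < x)%coqR -> Rpower x y = x `^ y.
Proof. by move=> /RltP x0; rewrite /Rpower /powR gt_eqF // RexpE RlnE. Qed.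

Lemma B0norm_f_ta_le (t a : R) : (0 < t)%coqR -> (0 < a)%coqR ->
  (B0norm (f_ta t a) <=
    ((DerivativeEstimate.deriv_bound_const a * Rpower t (- (a / 2)) / (a / 2))%coqR)%:E)%E.
Proof.
move=> t0 a0.
set c := (DerivativeEstimate.deriv_bound_const a * Rpower t (- (a / 2)))%coqR.
have c0 : 0 < c.
  by apply/RltP/Rmult_lt_0_compat; [exact: DerivativeEstimate.deriv_bound_const_gt0 | exact: exp_pos].
have b0 : 0 < a / 2 by apply/RltP/Rdiv_lt_0_compat/Rlt_0_2.
rewrite -(integral_powR_shift _ _ c0 b0).
apply: ge0_le_integral_nonmeasurable.
- move=> x _; apply: le_trans (ereal_sup_ubound _); last by exists 0.
  by rewrite lee_fin; apply/RleP; exact: Complex.Cmod_ge_0.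
- move=> x /=; rewrite in_itv /= andbT => /RltP x0.
  apply: ge_ereal_sup => _ [eta _ <-]; rewrite lee_fin; apply/RleP.
  apply: Rle_trans (DerivativeEstimate.Cmod_Cderiv_f_ta_le t a (x, eta) t0 a0 x0) _.
  rewrite [Rpower (x + 1) _]Rpower_powR; first exact: Rle_refl.
  exact: Rplus_lt_0_compat x0 Rlt_0_1.
Qed.

Theorem lemma2p3 :
  (forall t alpha : R, (0 < t)%coqR -> (0 < alpha)%coqR -> inB (f_ta t alpha)) /\
  (forall alpha : R, (0 < alpha)%coqR ->
     exists M t0 : R, (0 < M)%coqR /\ (0 < t0)%coqR /\
       forall t : R, (t0 <= t)%coqR ->
         (B0norm (f_ta t alpha) <= ((M / Rpower t (alpha / 2))%coqR)%:E)%E).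
Proof.
split.
- move=> t a t0 a0; split; first exact: DerivativeEstimate.holo_Cplus_f_ta.
  exact: le_lt_trans (B0norm_f_ta_le _ _ t0 a0) (ltry _).
- move=> a a0.
  exists (DerivativeEstimate.deriv_bound_const a / (a / 2))%coqR, 1%coqR.
  split.
    apply: Rdiv_lt_0_compat; first exact: DerivativeEstimate.deriv_bound_const_gt0.
    exact: Rdiv_lt_0_compat a0 Rlt_0_2.
  split; first exact: Rlt_0_1.
  move=> t t1; have t0 : (0 < t)%coqR by exact: Rlt_le_trans Rlt_0_1 t1.
  apply: le_trans (B0norm_f_ta_le _ _ t0 a0) _; rewrite lee_fin; apply/RleP; right.
  by rewrite Rpower_Ropp /Rdiv Rmult_assoc (Rmult_comm (/ Rpower _ _)) -Rmult_assoc.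
Qed.
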